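(* Let $q=p^f$ with $p$ prime, and let $\mathbf{A}\in\mathrm{GL}_n(q)$, $n=q+1$, be the matrix defined in the context. Assume that $n=q+1=2^sr^t$ for some odd prime $r$ and integers $s,t\geqslant 0$. Then there exists a faithful $\langle\mathbf{A}\rangle$-irreducible linear $[n,2]_q$ code. If $q$ is a Mersenne prime, then $\mathbb{F}_q^n$ is a direct sum of faithful $\langle\mathbf{A}\rangle$-irreducible linear $[n,2]_q$ codes.
   Context: A linear $[n,k]_q$ code is a $k$-dimensional subspace of the row space $\mathbb{F}_q^n$. Write the multiplicative group $\mathbb{F}_q^*=\langle\eta,\lambda\rangle$ where $\lambda$ has odd order and $\eta$ has order a power of $2$. Let $\mathbf{D}=\mathrm{diag}(\eta\lambda,\lambda,\eta\lambda,\ldots,\eta\lambda)$ ($n\times n$; first entry $\eta\lambda$, second entry $\lambda$, remaining $n-2$ entries $\eta\lambda$), $\mathbf{P}=\begin{pmatrix}\mathbf{0}' & \mathbf{I}_{n-1}\\ 1 & \mathbf{0}\end{pmatrix}$ (with $\mathbf{0}'$ the zero column of length $n-1$, $\mathbf{0}$ the zero row of length $n-1$), and $\mathbf{A}=\mathbf{D}\mathbf{P}$, acting on $\mathbb{F}_q^n$ by right multiplication. A code $\mathcal{C}$ is $\langle\mathbf{A}\rangle$-invariant if $\mathcal{C}\mathbf{A}\subseteq\mathcal{C}$; an $\langle\mathbf{A}\rangle$-invariant $[n,k]_q$ code is $\langle\mathbf{A}\rangle$-irreducible if it contains no $\langle\mathbf{A}\rangle$-invariant $[n,k']_q$ code with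 $1\leqslant k'<k$, and faithful if no nonidentity element of $\langle\mathbf{A}\rangle$ fixes it pointwise. *)

From HB Require Import structures.
From mathcomp Require Import all_boot all_order all_algebra all_fingroup all_field.
Set Implicit Arguments. Unset Strict Implicit. Unset Printing Implicit Defensive.
Import GRing.Theory.
Local Open Scope ring_scope.

(* Matrices of size m.+1 x m.+1 over a field F; codes are row spaces of
   square matrices (mxalgebra), acting by right multiplication. *)

Definition Dmat (F : fieldType) (m : nat) (eta lam : F) : 'M[F]_m.+1 :=
  diag_mx (\row_(i < m.+1) (if val i == 1%N then lam else eta * lam)).

(* P = [[0', I_{n-1}], [1, 0]] : row i has its 1 in column (i+1) mod n *)
Definition Pmat (F : fieldType) (m : nat) : 'M[F]_m.+1 :=
  \matrix_(i < m.+1, j < m.+1) (if val j == ((val i).+1 %% m.+1)%N then 1 else 0).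

Definition Amat (F : fieldType) (m : nat) (eta lam : F) : 'M[F]_m.+1 :=
  Dmat m eta lam *m Pmat F m.

Definition Ainvariant (F : fieldType) (m : nat) (A C : 'M[F]_m.+1) : Prop :=
  (C *m A <= C)%MS.

Definition Airreducible (F : fieldType) (m : nat) (A C : 'M[F]_m.+1) : Prop :=
  Ainvariant A C /\
  forall C' : 'M[F]_m.+1, (C' <= C)%MS -> Ainvariant A C' ->
    ~ (1 <= \rank C' < \rank C)%N.

Definition Afaithful (F : fieldType) (m : nat) (A C : 'M[F]_m.+1) : Prop :=
  forall k : nat, (forall v : 'rV[F]_m.+1, (v <= C)%MS -> v *m A ^+ k = v) ->
    A ^+ k = 1.

Definition mersenne_prime (q : nat) : Prop :=
  prime q /\ exists k : nat, q = (2 ^ k - 1)%N.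

(* Let L = F_(q^2) and let tau be a nonzero F-linear form on L.  For al in L
   with al^(q+1) = c, the product of the diagonal of D (here c = eta lam^2),
   the map z |-> (tau (z x_j))_j with x_j = d_0 ... d_(j-1) al^-j turns
   multiplication by al into right multiplication by A, so its image C_al is
   an <A>-invariant code.  When al generates the cyclic group L^*, C_al has
   dimension dim_F L = 2, is irreducible (a nonzero invariant subcode contains
   the images of all z al^k, hence of all of L), and is faithful: if A^k fixes
   C_al then al^k = 1, so be^k = 1 for each of the q+1 roots be of
   x^(q+1) = c, and the codes C_be together span F^n (a Vandermonde argument),
   whence A^k = 1.  Since c generates F^*, c = g^(m(q+1)) for a generator g of
   L^* and some m coprime to q-1; the roots are g^(m + j(q-1)), j <= q, and
   such a root is primitive iff m + j(q-1) is coprime to q^2-1.  This holds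
   for j = 0 or j = 1 when q+1 = 2^s r^t, and for every j when q+1 is a power
   of 2, in which case a maximal direct subfamily of the codes C_be still
   spans F^n. *)

From HB Require Import structures.
From mathcomp Require Import all_boot all_order all_algebra all_fingroup all_field.
From mathcomp Require Import all_solvable.
From mathcomp Require Import ring zify.
Set Implicit Arguments.
Unset Strict Implicit.
Unset Printing Implicit Defensive.
Import GRing.Theory.
Local Open Scope ring_scope.

Section DirectSubfamily.
Variables (K : fieldType) (m : nat) (A : 'M[K]_m.+1).

Lemma Ainvariant_cap X Y :
  Ainvariant A X -> Ainvariant A Y -> Ainvariant A (X :&: Y)%MS.
Proof.
move=> AX AY; rewrite /Ainvariant sub_capmx.
by rewrite (submx_trans (submxMr _ (capmxSl _ _)) AX) (submx_trans (submxMr _ (capmxSr _ _)) AY).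
Qed.

Lemma Ainvariant_sum (I : Type) (r : seq I) (W : I -> 'M[K]_m.+1) :
  (forall i, Ainvariant A (W i)) -> Ainvariant A (\sum_(i <- r) W i)%MS.
Proof.
move=> AW; rewrite /Ainvariant; elim: r => [|i r IHr].
  by rewrite big_nil mul0mx sub0mx.
by rewrite big_cons addsmxMr addsmxS ?AW.
Qed.

Lemma Ainvariant_expmx C k : Ainvariant A C -> (C *m A ^+ k <= C)%MS.
Proof.
move=> AC; elim: k => [|k IHk]; first by rewrite expr0 mulmx1.
by rewrite exprSr mulmxA (submx_trans (submxMr _ IHk) AC).
Qed.

Lemma Airreducible_sub_or_cap0 W S : Airreducible A W -> Ainvariant A S ->
  (W <= S)%MS \/ \rank (W :&: S)%MS = 0%N.
Proof.
move=> [AW irrW] AS; have [->|cap_gt0] := posnP (\rank (W :&: S))%MS; first by right.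
left; apply: submx_trans (capmxSr W S); apply: contraT => W'cap; exfalso.
apply: (irrW _ (capmxSl W S) (Ainvariant_cap AW AS)).
by rewrite cap_gt0 rank_ltmx // ltmxE capmxSl.
Qed.

Lemma Airreducible_direct_subfamily (I : Type) (W : I -> 'M[K]_m.+1) (s : seq I) :
  (forall i, Airreducible A (W i)) ->
  exists J : seq I,
    \rank (\sum_(i <- J) W i)%MS = (\sum_(i <- J) \rank (W i))%N /\
    (\sum_(i <- J) W i :=: \sum_(i <- s) W i)%MS.
Proof.
move=> irrW; elim: s => [|i s [J [rkJ eqJ]]]; first by exists [::]; rewrite !big_nil mxrank0.
set S := (\sum_(j <- J) W j)%MS.
have AS : Ainvariant A S by apply: Ainvariant_sum => j; case: (irrW j).
case: (Airreducible_sub_or_cap0 (irrW i) AS) => [WiS | cap0].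
  exists J; split=> //; rewrite big_cons.
  have Wi_s : (W i <= \sum_(j <- s) W j)%MS by rewrite -eqJ.
  exact: eqmx_trans eqJ (eqmx_sym (addsmx_idPr Wi_s)).
exists (i :: J); split.
  by rewrite !big_cons -rkJ -(mxrank_sum_cap (W i) S) cap0 addn0.
by rewrite !big_cons; apply: adds_eqmx.
Qed.

Lemma Airreducible_direct_sum_full k (W : 'I_k -> 'M[K]_m.+1) :
  (forall i, Airreducible A (W i)) -> (1%:M <= \sum_i W i)%MS ->
  exists k' (f : 'I_k' -> 'I_k), mxdirect (\sum_i W (f i)) /\ (1%:M <= \sum_i W (f i))%MS.
Proof.
move=> irrW fullW; have [J [rkJ eqJ]] := Airreducible_direct_subfamily (index_enum 'I_k) irrW.
have sumJ (T : Type) (idx : T) op (G : 'I_k -> T) :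
  \big[op/idx]_(i < size J) G (tnth (in_tuple J) i) = \big[op/idx]_(j <- J) G j.
  by rewrite (big_tuple _ _ (in_tuple J)).
exists (size J), (tnth (in_tuple J)); rewrite mxdirectE /= !sumJ rkJ eqJ.
by rewrite (sumJ _ _ _ (fun j => \rank (W j))) eqxx.
Qed.

End DirectSubfamily.

Section CoprimeProgression.
Local Open Scope nat_scope.
Variables (q mm : nat).
Hypothesis mm_coprime : coprime mm q.-1.

Lemma coprime_progression j : coprime (mm + j * q.-1) q.-1.
Proof. by rewrite coprime_sym /coprime addnC gcdnMDl gcdnC. Qed.

Lemma odd_progression j : odd q -> odd (mm + j * q.-1).
Proof.
case: q mm_coprime => [|p] //= cop odd_p.
have odd_mm : odd mm.
  apply: contraLR cop => even_mm; rewrite /coprime.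
  apply/negP => /eqP gcd1; have : 2 %| gcdn mm p by rewrite dvdn_gcd !dvdn2 even_mm odd_p.
  by rewrite gcd1.
by rewrite oddD oddM (negbTE odd_p) odd_mm andbF.
Qed.

Lemma coprime_progression_pow2 j s : 2 ^ s %| q.+1 -> coprime (mm + j * q.-1) (2 ^ s).
Proof.
case: s => [|s] pow2_q1; first by rewrite coprimen1.
have : 2 %| q.+1 by apply: dvdn_trans pow2_q1; rewrite dvdn_exp.
rewrite dvdn2 /= negbK => odd_q.
by rewrite coprime_pexpr // coprimen2 odd_progression.
Qed.

Lemma coprime_progression_mersenne s j :
  q.+1 = 2 ^ s -> coprime (mm + j * q.-1) (q.-1 * q.+1).
Proof.
by move=> q1E; rewrite coprimeMr coprime_progression q1E coprime_progression_pow2 ?q1E.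
Qed.

Lemma exists_coprime_progression s r t : prime r -> odd r ->
  q.+1 = 2 ^ s * r ^ t -> exists2 j, j < 2 & coprime (mm + j * q.-1) (q.-1 * q.+1).
Proof.
move=> r_pr r_odd q1E.
have cop2 j : coprime (mm + j * q.-1) (2 ^ s) by rewrite coprime_progression_pow2 // q1E dvdn_mulr.
have copE j : coprime (mm + j * q.-1) (q.-1 * q.+1) = coprime (mm + j * q.-1) (r ^ t).
  by rewrite coprimeMr coprime_progression q1E coprimeMr cop2.
case: t copE q1E => [|t] copE q1E; first by exists 0 => //; rewrite copE coprimen1.
have r_q1 : r %| q.+1 by rewrite q1E dvdn_mull // dvdn_exp.
have r'q_1 : ~~ (r %| q.-1).
  apply: contraL r_odd => r_q_1.
  have q_gt0 : 0 < q.
    by rewrite lt0n; apply: contraTneq r_q1 => ->; rewrite dvdn1 neq_ltn prime_gt1 ?orbT.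
  have : r %| q.+1 - q.-1 by rewrite dvdn_sub.
  have -> : q.+1 - q.-1 = 2 by lia.
  move/dvdn_leq => /(_ isT); have := prime_gt1 r_pr.
  by case: r {r_pr r_q1 r_q_1 cop2 copE q1E} => [|[|[|]]].
have cop_r j : ~~ (r %| mm + j * q.-1) -> coprime (mm + j * q.-1) (q.-1 * q.+1).
  by move=> r'x; rewrite copE coprime_pexpr // coprime_sym prime_coprime.
have [r_mm|r'mm] := boolP (r %| mm).
  by exists 1 => //; apply: cop_r; rewrite mul1n (dvdn_addr _ r_mm).
by exists 0 => //; apply: cop_r; rewrite addn0.
Qed.

End CoprimeProgression.

Section GroupOrders.
Local Open Scope group_scope.

Lemma order_eq_of_expg_eq1 (gT hT : finGroupType) (x : gT) (y : hT) :
  (forall k, (x ^+ k == 1) = (y ^+ k == 1)) -> #[x] = #[y].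
Proof.
by move=> eqX; apply/eqP; rewrite eqn_dvd !order_dvdn eqX expg_order -eqX expg_order !eqxx.
Qed.

Lemma cycle_mul_sqr (gT : finGroupType) (x y : gT) :
  commute x y -> (2%N).-nat #[x] -> odd #[y] -> <[x * y ^+ 2]> = <<[set x; y]>>.
Proof.
move=> cxy x2 y_odd; have cxy2 := commuteX 2 cxy.
have cop : coprime #[x] #[y ^+ 2].
  by apply: (pnat_coprime x2); rewrite -odd_2'nat (dvdn_odd (orderXdvd _ _)).
have /eqP cycle_y2 : generator <[y]> (y ^+ 2) by rewrite generator_coprime coprimen2.
apply/eqP; rewrite eqEsubset cycle_subG groupM ?groupX ?mem_gen ?set21 ?set22 //=.
rewrite gen_subG; apply/subsetP => z; rewrite !inE => /orP[] /eqP ->.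
  exact: subsetP (cycleMsub cxy2 cop) _ (cycle_id x).
have : y \in <[y ^+ 2]> by rewrite -cycle_y2 cycle_id.
by apply: subsetP; rewrite cxy2 cycleMsub // coprime_sym.
Qed.

Section CyclicProgression.
Variables (gT : finGroupType) (g : gT) (a b : nat).
Hypothesis g_order : #[g] = (a * b)%N.

Lemma cycle_root_exponent z : z \in <[g]> -> #[z] = a ->
  exists2 mm, z = (g ^+ (mm * b)) & coprime mm a.
Proof.
case/cycleP => e ->; rewrite orderXgcd g_order => ze_order.
have /andP[a_gt0 b_gt0] : ((0 < a) && (0 < b))%N by rewrite -muln_gt0 -g_order order_gt0.
have gcd_b : gcdn (a * b) e = b.
  apply/eqP; rewrite -(eqn_pmul2l a_gt0) -{1}ze_order divnK ?dvdn_gcdl //.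
have /dvdnP[mm e_mm] : (b %| e)%N by rewrite -gcd_b dvdn_gcdr.
exists mm; first by rewrite e_mm.
by move/eqP: gcd_b; rewrite e_mm -muln_gcdl -{2}[b]mul1n eqn_pmul2r // gcdnC.
Qed.

Lemma expg_progression mm j : ((g ^+ (mm + j * a)) ^+ b = g ^+ (mm * b)).
Proof.
by rewrite -expgM mulnDl -mulnA -g_order expgD (mulnC j) (expgM g #[g]) expg_order expg1n mulg1.
Qed.

Lemma expg_progression_inj mm : {in gtn b &, injective (fun j => g ^+ (mm + j * a))}.
Proof.
move=> i j ib jb /eqP; rewrite eq_expg_mod_order g_order eqn_modDl [(a * b)%N]mulnC.
have a_gt0 : (0 < a)%N by move: (order_gt0 g); rewrite g_order muln_gt0 => /andP[].
by rewrite -!muln_modl eqn_pmul2r // !modn_small // => /eqP.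
Qed.

Lemma cycle_progression mm j : coprime (mm + j * a) (a * b) ->
  <[g ^+ (mm + j * a)]> = <[g]>.
Proof.
move=> cop; have /eqP -> // : generator <[g]> (g ^+ (mm + j * a)).
by rewrite generator_coprime g_order coprime_sym.
Qed.

End CyclicProgression.

End GroupOrders.

Section TraceCodes.
Variables (F : fieldType) (L : fieldExtType F) (tau : {scalar L}).
Hypothesis tau1_neq0 : tau 1 != 0.
Variables (m : nat) (d : nat -> F).
Hypothesis d_neq0 : forall i, (i <= m)%N -> d i != 0.

Local Notation n := m.+1.
Local Notation A := (diag_mx (\row_(i < n) d i) *m Pmat F m).

Definition diag_prefix (j : nat) : F := \prod_(i < j) d i.

Definition weight (al : L) (j : nat) : L := diag_prefix j *: al ^- j.

Definition codeword (al z : L) : 'rV[F]_n := \row_(j < n) tau (z * weight al j).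

Fact codeword_is_linear al : linear (codeword al).
Proof. by move=> a z w; apply/rowP => j; rewrite !mxE mulrDl -scalerAl linearP. Qed.

HB.instance Definition _ al := GRing.isSemilinear.Build F L 'rV[F]_n _ (codeword al)
  (GRing.semilinear_linear (codeword_is_linear al)).

Definition code_mx (al : L) : 'M[F]_(\dim {:L}, n) :=
  \matrix_(i < \dim {:L}) codeword al (vbasis {:L})`_i.

Definition code (al : L) : 'M[F]_n := <<code_mx al>>%MS.

Lemma mul_code_mx al u : u *m code_mx al = codeword al (passmx.vecof (vbasis {:L}) u).
Proof. by rewrite mulmx_sum_row linear_sum; apply: eq_bigr => i _; rewrite rowK linearZ. Qed.

Lemma codeword_sub al z : (codeword al z <= code al)%MS.
Proof.
rewrite genmxE -(passmx.rVofK (vbasisP {:L}) z) -mul_code_mx; exact: submxMl.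
Qed.

Lemma sub_codeP al v : (v <= code al)%MS -> exists z, v = codeword al z.
Proof. by rewrite genmxE => /submxP[u ->]; rewrite mul_code_mx; eexists. Qed.

Lemma code_subP al k (C : 'M[F]_(k, n)) :
  (forall z, (codeword al z <= C)%MS) -> (code al <= C)%MS.
Proof. by move=> sub_C; rewrite genmxE; apply/row_subP => i; rewrite rowK. Qed.

Lemma tau_nondegenerate y : (forall z, tau (z * y) = 0) -> y = 0.
Proof.
move=> tau_y0; apply: contraTeq tau1_neq0 => y_neq0.
by rewrite -(mulVf y_neq0) tau_y0 eqxx.
Qed.

Lemma diag_prefix_neq0 j : (j <= n)%N -> diag_prefix j != 0.
Proof.
by move=> le_jn; apply/prodf_neq0 => i _; rewrite d_neq0 // -ltnS (leq_trans _ le_jn).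
Qed.

Lemma Amx_entry i j : A i j = d i * (j == ordS i)%:R.
Proof. by rewrite mul_diag_mx !mxE -val_eqE /=; case: ifP. Qed.

Section Root.
Variable al : L.
Hypothesis al_root : al ^+ n = (diag_prefix n)%:A.

Lemma root_neq0 : al != 0.
Proof.
apply: contraTneq _ (diag_prefix_neq0 (leqnn n)) => al0.
by move: al_root; rewrite al0 expr0n /= => /esym/eqP; rewrite scaler_eq0 oner_eq0 orbF negbK.
Qed.

Lemma weight0 : weight al 0 = 1.
Proof. by rewrite /weight /diag_prefix big_ord0 scale1r expr0 invr1. Qed.

Lemma weight_ordS (i : 'I_n) : d i *: weight al i = al * weight al (ordS i).
Proof.
have al_neq0 := root_neq0; rewrite /weight scalerA -scalerAr.
have [lt_im | ] := ltnP i m.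
  have -> : (ordS i : nat) = i.+1 by rewrite /= modn_small.
  rewrite /diag_prefix big_ord_recr /= mulrC exprS.
  by congr (_ *: _); field; rewrite expf_neq0.
rewrite leq_eqVlt ltnNge -ltnS ltn_ord orbF => /eqP m_i.
have -> : (ordS i : nat) = 0%N by rewrite /= -m_i modnn.
rewrite expr0 invr1 mulr1 -[al in RHS](mulfK (expf_neq0 i al_neq0)) -exprS -m_i al_root.
by rewrite /diag_prefix big_ord_recr /= big_ord0 scale1r mulr_algl mulrC.
Qed.

Lemma codewordA z : codeword al z *m A = codeword al (z * al).
Proof.
have shift (i : 'I_n) : tau (z * weight al i) * d i = tau (z * al * weight al (ordS i)).
  by rewrite -mulrA -weight_ordS -[in RHS]scalerAr [in RHS]linearZ /= mulrC.
apply/rowP => j; rewrite !mxE.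
under eq_bigr => i _ do rewrite Amx_entry mulrA mxE shift.
rewrite (bigD1 (ord_pred j)) // ord_predK /= eqxx mulr1 big1 ?addr0 // => i ne_ij.
by rewrite -[j in j == _]ord_predK (inj_eq (@ordS_inj _)) eq_sym (negPf ne_ij) mulr0.
Qed.

Lemma codewordAX z k : codeword al z *m A ^+ k = codeword al (z * al ^+ k).
Proof.
elim: k => [|k IHk]; first by rewrite expr0 mulmx1 mulr1.
by rewrite exprSr mulmxA IHk codewordA exprSr mulrA.
Qed.

Lemma code_invariant : Ainvariant A (code al).
Proof.
rewrite /Ainvariant (eqmxMr _ (genmxE _)); apply/row_subP => i.
by rewrite row_mul rowK codewordA codeword_sub.
Qed.

End Root.

Section Spanning.
Variable als : 'I_n -> L.
Hypothesis als_root : forall j, als j ^+ n = (diag_prefix n)%:A.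
Hypothesis als_inj : injective als.

Lemma codeword_orthogonal_eq0 (w : 'cV[F]_n) :
  (forall j z, codeword (als j) z *m w = 0) -> w = 0.
Proof.
move=> orth_w.
have weights_eq0 j : \sum_(i < n) w i 0 *: weight (als j) i = 0.
  apply: tau_nondegenerate => z; have /matrixP/(_ 0 0) := orth_w j z.
  rewrite !mxE => <-; rewrite mulr_sumr linear_sum; apply: eq_bigr => i _.
  by rewrite -scalerAr linearZ /= mxE mulrC.
pose Q : {poly L} := \poly_(i < n) (w (inord i) 0 * diag_prefix i)%:A.
have rootQ j : root Q (als j)^-1.
  rewrite /root horner_poly -[X in _ == X](weights_eq0 j); apply/eqP/eq_bigr => i _.
  by rewrite inord_val mulr_algl -scalerA exprVn.
have Q0 : Q = 0.
  apply: contraTeq (size_poly n _) => Q_neq0; rewrite -ltnNge.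
  have := max_poly_roots Q_neq0 (rs := [seq (als j)^-1 | j <- enum 'I_n]).
  rewrite size_map size_enum_ord; apply; last first.
    by rewrite map_inj_uniq ?enum_uniq // => i j /invr_inj /als_inj.
  by apply/allP => _ /mapP[j _ ->].
apply/matrixP => i k; rewrite (ord1 k) mxE.
have /eqP := congr1 (fun p : {poly L} => p`_i) Q0.
rewrite coef_poly ltn_ord inord_val coef0 scaler_eq0 oner_eq0 orbF mulf_eq0.
by rewrite (negPf (diag_prefix_neq0 (ltnW (ltn_ord i)))) orbF => /eqP.
Qed.

Lemma sum_code_full : (1%:M <= \sum_j code (als j))%MS.
Proof.
set S := (\sum_j code (als j))%MS.
rewrite sub1mx -cokermx_eq0; apply/eqP/matrixP => i k; rewrite mxE.
suff /colP/(_ i) : col k (cokermx S) = 0 by rewrite !mxE.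
apply: codeword_orthogonal_eq0 => j z.
have /submxP[u ->] : (codeword (als j) z <= S)%MS.
  exact: submx_trans (codeword_sub _ _) (sumsmx_sup j _ _).
by rewrite colE mulmxA -(mulmxA u) mulmx_coker mulmx0 mul0mx.
Qed.

Lemma Amx_expX_eq1 k : (forall j, als j ^+ k = 1) -> A ^+ k = 1.
Proof.
move=> als_k; have fixS (v : 'rV[F]_n) : (v <= \sum_j code (als j))%MS -> v *m A ^+ k = v.
  case/sub_sumsmxP => u ->; rewrite mulmx_suml; apply: eq_bigr => j _.
  have [z ->] := sub_codeP (submxMl (u j) (code (als j))).
  by rewrite codewordAX // als_k mulr1.
apply/row_matrixP => i; rewrite rowE -row1 fixS //.
exact: submx_trans (row_sub i 1%:M) sum_code_full.
Qed.

End Spanning.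

Section Primitive.
Variable al : L.
Hypothesis al_root : al ^+ n = (diag_prefix n)%:A.
Hypothesis al_gen : forall y, y != 0 -> exists k, y = al ^+ k.

Lemma codeword_eq0 z : codeword al z = 0 -> z = 0.
Proof.
move=> cw0; apply: tau_nondegenerate => y.
have [-> | /al_gen[k ->]] := eqVneq y 0; first by rewrite mul0r linear0.
have /rowP/(_ 0) := codewordAX al_root z k; rewrite cw0 mul0mx !mxE.
by rewrite weight0 mulr1 mulrC.
Qed.

Lemma rank_code : \rank (code al) = \dim {:L}.
Proof.
rewrite genmxE; apply/eqP; rewrite -[_ == _]/(row_free _) -kermx_eq0.
apply/rowV0P => v /sub_kermxP; rewrite mul_code_mx => /codeword_eq0/eqP.
by rewrite passmx.vecof_eq0 ?vbasisP // => /eqP.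
Qed.

Lemma code_irreducible : Airreducible A (code al).
Proof.
split=> [|C' sub_C' inv_C' /andP[rk_gt0]]; first exact: code_invariant.
apply/negP; rewrite -leqNgt mxrankS // code_subP // => w.
have /rowV0Pn[v vC' v_neq0] : C' != 0 by rewrite -mxrank_eq0 -lt0n.
have [z vE] := sub_codeP (submx_trans vC' sub_C').
have z_neq0 : z != 0 by apply: contraNneq v_neq0 => z0; rewrite vE z0 linear0.
have [-> | w_neq0] := eqVneq w 0; first by rewrite linear0 sub0mx.
have [k wE] := al_gen (mulf_neq0 (invr_neq0 z_neq0) w_neq0).
rewrite -(mulVKf z_neq0 w) wE -codewordAX // -vE.
exact: submx_trans (submxMr _ vC') (Ainvariant_expmx k inv_C').
Qed.

Lemma code_faithful (als : 'I_n -> L) :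
  (forall j, als j ^+ n = (diag_prefix n)%:A) -> injective als -> Afaithful A (code al).
Proof.
move=> als_root als_inj k fix_k; apply: (Amx_expX_eq1 als_root als_inj) => j.
have /fix_k := codeword_sub al 1; rewrite codewordAX // mul1r => /eqP.
rewrite -subr_eq0 -linearB => /eqP/codeword_eq0/eqP; rewrite subr_eq0 => /eqP al_k.
have [i ->] := al_gen (root_neq0 (als_root j)).
by rewrite exprAC al_k expr1n.
Qed.

End Primitive.

End TraceCodes.

Lemma exists_scalar_neq0 (K : fieldType) (vT : vectType K) (v : vT) :
  v != 0 -> exists tau : {scalar vT}, tau v != 0.
Proof.
move=> v_neq0; suff /existsP[i coord_i] : [exists i, coord (vbasis {:vT}) i v != 0].
  by exists (coord (vbasis {:vT}) i).
apply: contraNT v_neq0 => /existsPn coord0.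
rewrite (coord_vbasis (memvf v)) big1 // => i _.
by rewrite (eqP (negbNE (coord0 i))) scale0r.
Qed.

Lemma alg_expr_eq1 (K : fieldType) (L : fieldExtType K) (a : K) k :
  ((a%:A : L) ^+ k == 1) = (a ^+ k == 1).
Proof. by rewrite -in_algE -rmorphXn fmorph_eq1. Qed.

Lemma exists_irreducible_quadratic (F : finFieldType) :
  exists h : {poly F}, [/\ irreducible_poly h, h \is monic & size h = 3%N].
Proof.
(* (x, y) |-> (x + y, x y) identifies (0, 1) with (1, 0), hence misses some
   (a, b); then X^2 - a X + b has no root in F. *)
pose f (xy : F * F) := (xy.1 + xy.2, xy.1 * xy.2).
have /existsP[[a b] ab_f'] : [exists ab, ab \notin codom f].
  apply: contraT; rewrite negb_exists => /forallP /= onto_f.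
  have /image_injP inj_f : #|codom f| == #|{: F * F}|.
    by apply/eqP/eq_card => ab; rewrite !inE; apply/negbNE/onto_f.
  have := inj_f (0, 1) (1, 0) isT isT; rewrite /f /= addr0 add0r mulr0 mul0r.
  by move=> /(_ erefl) [] /eqP; rewrite eq_sym oner_eq0.
pose h : {poly F} := ('X^2 : {poly F}) + (- a *: 'X + b%:P).
have size_lin : (size (- a *: 'X + b%:P)%R < size ('X^2 : {poly F}))%N.
  rewrite size_polyXn ltnS (leq_trans (size_polyD _ _)) // geq_max size_polyC.
  by rewrite (leq_trans (leq_b1 _)) // andbT (leq_trans (size_scale_leq _ _)) // size_polyX.
have size_h : size h = 3%N by rewrite size_polyDl // size_polyXn.
exists h; split=> //; last by rewrite monicE lead_coefDl // lead_coefXn.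
apply: cubic_irreducible; first by rewrite size_h.
move=> r; apply: contra ab_f' => /rootP h_r; apply/codomP; exists (r, a - r).
rewrite /f /= addrC subrK; congr (_, _).
by move: h_r; rewrite !hornerE /= => h_r; apply/eqP; rewrite -subr_eq0 -h_r; apply/eqP; ring.
Qed.

Lemma unit_cycle_powers (L : finFieldType) (u : {unit L}) :
  <[u]>%g = [set: {unit L}] -> forall y, y != 0 -> exists k, y = val u ^+ k.
Proof.
move=> gen_u y y_neq0; have y_unit : y \is a GRing.unit by rewrite unitfE.
have : FinRing.unit L y_unit \in <[u]>%g by rewrite gen_u inE.
by case/cycleP => k yE; exists k; rewrite -FinRing.val_unitX -yE.
Qed.

Section QuadraticExtension.
Variables (F : finFieldType) (h : {poly F}).
Hypotheses (h_irr : monic_irreducible_poly h) (h_size : size h = 3%N).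
Local Notation q := #|F|.
Local Notation L := {poly %/ h with h_irr}.

Lemma dim_qfpoly_quadratic : \dim {:L} = 2%N.
Proof. by rewrite (dim_polyn F (size (mk_monic h)).-1) (mk_monicE h_irr) h_size. Qed.

Lemma card_unit_qfpoly_quadratic : #|[set: {unit L}]| = (q.-1 * q.+1)%N.
Proof.
rewrite card_finField_unit card_qfpoly h_size.
by case: q => [|p]; rewrite /= ?expnS ?expn1 /=; nia.
Qed.

Lemma order_alg_unit (c : {unit F}) (cL : {unit L}) :
  val cL = (val c)%:A -> #[cL]%g = #[c]%g.
Proof.
move=> cLE; apply: order_eq_of_expg_eq1 => k.
rewrite -[(cL ^+ k == 1)%g]val_eqE -[(c ^+ k == 1)%g]val_eqE !FinRing.val_unitX.
by rewrite !FinRing.val_unit1 cLE alg_expr_eq1.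
Qed.

Variables (d : nat -> F) (c : {unit F}).
Hypotheses (d_neq0 : forall i, (i <= q)%N -> d i != 0) (c_gen : <[c]>%g = [set: {unit F}]).
Hypothesis dc : diag_prefix d q.+1 = val c.

Lemma qfpoly_trace_code_family :
  exists2 mm, coprime mm q.-1 &
  exists C : 'I_q.+1 -> 'M[F]_q.+1, (1%:M <= \sum_j C j)%MS /\
    forall j : 'I_q.+1, coprime (mm + j * q.-1) (q.-1 * q.+1) ->
      [/\ \rank (C j) = 2%N, Airreducible (diag_mx (\row_(i < q.+1) d i) *m Pmat F q) (C j)
        & Afaithful (diag_mx (\row_(i < q.+1) d i) *m Pmat F q) (C j)].
Proof.
have [g gen_g] := cyclicP (field_unit_group_cyclic [set: {unit L}]).
have g_order : #[g]%g = (q.-1 * q.+1)%N by rewrite orderE -gen_g card_unit_qfpoly_quadratic.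
have cA_unit : (val c)%:A \is a @GRing.unit L.
  by rewrite unitfE scaler_eq0 oner_eq0 orbF; have := valP c; rewrite unitfE.
pose cL := FinRing.unit L cA_unit; have cL_val : val cL = (val c)%:A by [].
have cL_order : #[cL]%g = q.-1.
  by rewrite (order_alg_unit cL_val) orderE c_gen card_finField_unit.
have cL_g : cL \in <[g]>%g by rewrite -gen_g inE.
have [mm cLE mm_coprime] := cycle_root_exponent g_order cL_g cL_order.
exists mm => //.
have [tau tau1_neq0] := exists_scalar_neq0 (oner_neq0 L).
pose al (j : 'I_q.+1) := val (g ^+ (mm + j * q.-1))%g.
have al_root j : al j ^+ q.+1 = (diag_prefix d q.+1)%:A.
  by rewrite -FinRing.val_unitX expg_progression // -cLE cL_val dc.
have al_inj : injective al.
  move=> i j /val_inj eq_ij; apply: val_inj.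
  by apply: (expg_progression_inj g_order _ _ eq_ij); rewrite inE.
exists (fun j => code tau q d (al j)).
split=> [|j cop_j]; first exact: (sum_code_full tau1_neq0 d_neq0 al_inj).
have al_gen : forall y, y != 0 -> exists k, y = al j ^+ k.
  by apply: unit_cycle_powers; rewrite (cycle_progression g_order).
split; last exact: (code_faithful tau1_neq0 d_neq0 (al_root j) al_gen al_root al_inj).
  by rewrite (rank_code tau1_neq0 d_neq0 (al_root j) al_gen) dim_qfpoly_quadratic.
exact: (code_irreducible tau d_neq0 (al_root j) al_gen).
Qed.

End QuadraticExtension.

Lemma diag_prefix_Dmat (F : finFieldType) (eta lam : F) :
  diag_prefix (fun i => if i == 1%N then lam else eta * lam) #|F|.+1 = eta * lam ^+ 2.
Proof.
have := expf_card eta; have := expf_card lam; have := card_finNzRing_gt1 F.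
case: #|F| => [|[|q]] // _ lamE etaE; rewrite /diag_prefix big_ord_recl big_ord_recl /=.
rewrite (eq_bigr (fun=> eta * lam)) ?prodr_const ?card_ord //.
by rewrite mulrCA -exprS exprMn etaE lamE mulrCA expr2.
Qed.

Lemma Amat_trace_code_family (F : finFieldType) (eta lam : {unit F}) :
  (2%N).-nat #[eta]%g -> odd #[lam]%g -> <<[set eta; lam]>>%g = [set: {unit F}] ->
  let A := Amat #|F| (val eta) (val lam) in
  exists2 mm, coprime mm #|F|.-1 &
  exists C : 'I_#|F|.+1 -> 'M[F]_#|F|.+1, (1%:M <= \sum_j C j)%MS /\
    forall j : 'I_#|F|.+1, coprime (mm + j * #|F|.-1) (#|F|.-1 * #|F|.+1) ->
      [/\ \rank (C j) = 2%N, Airreducible A (C j) & Afaithful A (C j)].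
Proof.
move=> eta2 lam_odd gen_eta_lam A.
pose d i := if i == 1%N then val lam else val eta * val lam.
have unit_neq0 (u : {unit F}) : val u != 0 by rewrite -unitfE; exact: valP.
have d_neq0 i : (i <= #|F|)%N -> d i != 0 by rewrite /d; case: ifP; rewrite ?mulf_neq0.
have c_gen : <[eta * lam ^+ 2]>%g = [set: {unit F}].
  by rewrite cycle_mul_sqr //; apply: val_inj; rewrite !FinRing.val_unitM mulrC.
have dc : diag_prefix d #|F|.+1 = val (eta * lam ^+ 2)%g.
  by rewrite diag_prefix_Dmat FinRing.val_unitM FinRing.val_unitX.
have [h [h_irr h_monic h_size]] := exists_irreducible_quadratic F.
exact: (qfpoly_trace_code_family (h_irr, h_monic) h_size d_neq0 c_gen dc).
Qed.

Theorem theorem5p3 (F : finFieldType) (p f : nat) (hp : prime p) (hf : (0 < f)%N)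
  (hq : #|F| = (p ^ f)%N)
  (eta lam : {unit F})
  (heta : (2%N).-nat #[eta]%g) (hlam : odd #[lam]%g)
  (hgen : (<<[set eta; lam]>> = [set: {unit F}])%g)
  (s r t : nat) (hr : prime r) (hrodd : odd r)
  (hn : (#|F|).+1 = (2 ^ s * r ^ t)%N) :
  let A := Amat #|F| (val eta) (val lam) in
  (exists C : 'M[F]_(#|F|.+1),
     \rank C = 2%N /\ Airreducible A C /\ Afaithful A C) /\
  (mersenne_prime #|F| ->
   exists (k : nat) (Cs : 'I_k -> 'M[F]_(#|F|.+1)),
     (forall i, \rank (Cs i) = 2%N /\ Airreducible A (Cs i) /\ Afaithful A (Cs i)) /\
     mxdirect (\sum_(i < k) Cs i) /\
     (1%:M <= \sum_(i < k) Cs i)%MS).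
Proof.
move=> A; set q := #|F|.
have [mm mm_coprime [C [C_full C_good]]] := Amat_trace_code_family heta hlam hgen.
split=> [|[_ [k qE]]].
  have [j j_lt2 cop_j] := exists_coprime_progression mm_coprime hr hrodd hn.
  have j_lt : (j < q.+1)%N by rewrite (leq_trans j_lt2) // ltnS ltnW ?card_finNzRing_gt1.
  have [rk_C irr_C faithful_C] := C_good (Ordinal j_lt) cop_j.
  by exists (C (Ordinal j_lt)).
have q1E : q.+1 = (2 ^ k)%N by rewrite qE subn1 prednK ?expn_gt0.
have C_all j := C_good j (coprime_progression_mersenne mm_coprime j q1E).
have [k' [g [g_direct g_full]]] : exists k' (g : 'I_k' -> 'I_q.+1),
    mxdirect (\sum_i C (g i)) /\ (1%:M <= \sum_i C (g i))%MS.
  by apply: (Airreducible_direct_sum_full (A := A)) C_full => j; case: (C_all j).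
by exists k', (fun i => C (g i)); split=> // i; case: (C_all (g i)).
Qed.
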